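(* Consider the following cutting-plane algorithm for $\min_{\mathbf{x}\in\mathcal{X}}\Phi_R(\mathbf{x})$ with tolerance $\epsilon\ge0$. Initialize $L=1$, $\theta^{lb}=-\infty$, $\theta^{ub}=+\infty$, and pick $\hat{\mathbf{x}}^1\in\mathcal{X}$; the cut set is initially empty. While $\theta^{ub}-\theta^{lb}>\epsilon$: set $\hat{\mathbf x}=\hat{\mathbf x}^L$; for each $\omega\in\Omega$ compute an optimal solution $\hat{\mathbf S}^\omega$ of the problem defining $Q_\omega(\hat{\mathbf x})$; compute $(\hat p_\omega)\in\arg\min_{P\in\mathfrak P}\sum_\omega p_\omega f^\omega(\hat{\mathbf S}^\omega)$ and $\Phi_R(\hat{\mathbf x})=\sum_\omega\hat p_\omega f^\omega(\hat{\mathbf S}^\omega)$; if $\Phi_R(\hat{\mathbf x})<\theta^{ub}$ set $\theta^{ub}=\Phi_R(\hat{\mathbf x})$ and $\mathbf x^*=\hat{\mathbf x}$; add the cut $\eta\ge\Phi_R(\hat{\mathbf x})-\sum_{q=1}^k\sum_{i\in N}c_{q,i}(\hat{\mathbf x})x_{q,i}$ with $c_{q,i}(\hat{\mathbf x})=\max_{P\in\mathfrak P}\sum_\omega p_\omega\rho^\omega_{q,i}(\boldsymbol\emptyset)\hat y^\omega_{q,i}\xi^\omega_i$; solve the master problem $\min\{\eta:\mathbf x\in\mathcal X,\ \eta\in\mathbb R,\ (\eta,\mathbf x)\text{ satisfies all cuts added so far}\}$ exactly, obtaining $(\eta^{L+1},\hat{\mathbf x}^{L+1})$; set $\theta^{lb}=\eta^{L+1}$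 and $L\leftarrow L+1$. Assuming every subproblem (each $Q_\omega$, each optimization over $\mathfrak P$, and each master problem) is solved exactly, the algorithm terminates after finitely many iterations, and upon termination $\theta^{ub}=\Phi_R(\mathbf x^* )\le\min_{\mathbf x\in\mathcal X}\Phi_R(\mathbf x)+\epsilon$; in particular, with $\epsilon=0$ it returns a globally optimal solution $\mathbf x^*$ of $\min_{\mathbf x\in\mathcal X}\Phi_R(\mathbf x)$.
   Context: Let $n,k$ be positive integers, $N=\{1,\dots,n\}$, and $\mathbb{X}(N,k)$ the set of $k$-tuples $\mathbf{S}=(S_1,\dots,S_k)$ of pairwise disjoint subsets of $N$, identified with $\mathbf{s}\in\{0,1\}^{kn}$ via $s_{q,i}=1$ iff $i\in S_q$. A function $f:\mathbb{X}(N,k)\to\mathbb{R}$ is $k$-submodular if $f(\mathbf{X})+f(\mathbf{Y})\ge f(\mathbf{X}\sqcap\mathbf{Y})+f(\mathbf{X}\sqcup\mathbf{Y})$, where $\mathbf{X}\sqcap\mathbf{Y}=(X_q\cap Y_q)_q$ and the $i$-th component of $\mathbf{X}\sqcup\mathbf{Y}$ is $(X_i\cup Y_i)\setminus\bigcup_{q\ne i}(X_q\cup Y_q)$; monotone if $f(\mathbf X)\le f(\mathbf Y)$ whenever $X_q\subseteq Y_q$ for all $q$. $\Omega$ is a finite scenario set; for each $\omega$ we have $\xi^\omega\in\{0,1\}^n$ and a monotone $k$-submodular $f^\omega$ with marginal gains $\rho^\omega_{q,i}(\mathbf{X})=f^\omega(X_1,\dots,X_q\cup\{i\},\dots,X_k)-f^\omega(\mathbf{X})$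 for $i\notin\bigcup_rX_r$; $\boldsymbol\emptyset=(\emptyset,\dots,\emptyset)$. With nonnegative integer budgets $A_q,D_q$: $\mathcal{X}=\{\mathbf{x}\in\{0,1\}^{kn}:\sum_i x_{q,i}\le A_q\ \forall q,\ \sum_q x_{q,i}\le1\ \forall i\}$; $Q_\omega(\mathbf x)=\max\{f^\omega(\mathbf S):\mathbf S\in\mathbb X(N,k),\ s_{q,i}\le1-x_{q,i}\xi^\omega_i\ \forall q,i,\ \sum_i s_{q,i}\le D_q\ \forall q\}$. $\mathfrak P$ is a nonempty compact set of probability distributions $(p_\omega)_{\omega\in\Omega}$, and $\Phi_R(\mathbf x)=\min_{P\in\mathfrak P}\sum_\omega p_\omega Q_\omega(\mathbf x)$. $\hat y^\omega_{q,i}=1$ if $i\in\hat S^\omega_q$ and $0$ otherwise. *)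

From HB Require Import structures.
From mathcomp Require Import all_boot all_order all_algebra.
From mathcomp Require Import all_classical all_reals all_analysis.

Set Implicit Arguments.
Unset Strict Implicit.
Unset Printing Implicit Defensive.

Import Order.TTheory GRing.Theory Num.Theory numFieldNormedType.Exports.

Local Open Scope ring_scope.

(* A k-tuple of subsets of N = {1..n} (encoded as 'I_n).  Also used for the
   binary decision x in {0,1}^{kn}: x_{q,i} = 1 iff i \in x q. *)
Definition ktuple (n k : nat) := {ffun 'I_k -> {set 'I_n}}.

Definition in_Xk n k (S : ktuple n k) : Prop :=
  forall q r : 'I_k, q != r -> (S q :&: S r == finset.set0).

Definition kmeet n k (X Y : ktuple n k) : ktuple n k :=
  [ffun q => X q :&: Y q].

Definition kjoin n k (X Y : ktuple n k) : ktuple n k :=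
  [ffun q => (X q :|: Y q) :\: \bigcup_(r | r != q) (X r :|: Y r)].

Definition k_submodular (R : realType) n k (f : ktuple n k -> R) : Prop :=
  forall X Y, in_Xk X -> in_Xk Y ->
    f (kmeet X Y) + f (kjoin X Y) <= f X + f Y.

Definition k_monotone (R : realType) n k (f : ktuple n k -> R) : Prop :=
  forall X Y, in_Xk X -> in_Xk Y -> (forall q, X q \subset Y q) -> f X <= f Y.

Definition kempty n k : ktuple n k := [ffun _ => finset.set0].

Definition kadd n k (S : ktuple n k) (q : 'I_k) (i : 'I_n) : ktuple n k :=
  [ffun r => if r == q then i |: S r else S r].

Definition marginal (R : realType) n k (f : ktuple n k -> R)
  (S : ktuple n k) (q : 'I_k) (i : 'I_n) : R := f (kadd S q i) - f S.

Definition in_calX n k (A : 'I_k -> nat) (x : ktuple n k) : Prop :=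
  (forall q : 'I_k, \sum_(i < n) (i \in x q) <= A q)%N /\
  (forall i : 'I_n, \sum_(q < k) (i \in x q) <= 1)%N.

Definition Qfeas n k (D : 'I_k -> nat) (xi : 'I_n -> bool)
  (x S : ktuple n k) : Prop :=
  [/\ in_Xk S,
      (forall (q : 'I_k) (i : 'I_n), (i \in S q) <= 1 - (i \in x q) * xi i)%N
    & (forall q : 'I_k, \sum_(i < n) (i \in S q) <= D q)%N].

(* Q_omega(x): maximum of f over a finite nonempty set (written as sup) *)
Definition Qval (R : realType) n k (f : ktuple n k -> R) (D : 'I_k -> nat)
  (xi : 'I_n -> bool) (x : ktuple n k) : R :=
  sup (f @` [set S | Qfeas D xi x S])%classic.

Definition is_distr (R : realType) (Om : finType) (p : Om -> R) : Prop :=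
  (forall w, 0 <= p w) /\ \sum_(w : Om) p w = 1.

Definition PhiR (R : realType) n k (Om : finType) (f : Om -> ktuple n k -> R)
  (xi : Om -> 'I_n -> bool) (D : 'I_k -> nat) (Pf : set (Om -> R))
  (x : ktuple n k) : R :=
  inf [set \sum_(w : Om) p w * Qval (f w) D (xi w) x | p in Pf]%classic.

Definition cutcoef (R : realType) n k (Om : finType) (f : Om -> ktuple n k -> R)
  (xi : Om -> 'I_n -> bool) (Pf : set (Om -> R)) (Shat : Om -> ktuple n k)
  (q : 'I_k) (i : 'I_n) : R :=
  sup [set \sum_(w : Om) p w * (marginal (f w) (kempty n k) q i
           * (i \in Shat w q)%:R * (xi w i)%:R) | p in Pf]%classic.

(* a cut is a pair (Phi_R(xhat), c(xhat)); it reads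
   eta >= Phi_R(xhat) - sum_q sum_i c_{q,i}(xhat) x_{q,i} *)
Definition cut_ok (R : realType) n k (eta : R) (x : ktuple n k)
  (cut : R * ('I_k -> 'I_n -> R)) : Prop :=
  cut.1 - \sum_(q < k) \sum_(i < n) cut.2 q i * (i \in x q)%:R <= eta.

Definition master_opt (R : realType) n k (A : 'I_k -> nat)
  (cuts : seq (R * ('I_k -> 'I_n -> R))) (eta : R) (x : ktuple n k) : Prop :=
  [/\ in_calX A x,
      (forall c, c \in cuts -> cut_ok eta x c)
    & (forall (eta' : R) (x' : ktuple n k), in_calX A x' ->
         (forall c, c \in cuts -> cut_ok eta' x' c) -> eta <= eta')].

Record alg_state (R : realType) (n k : nat) := AlgState {
  theta_lb : \bar R;
  theta_ub : \bar R;
  x_star : ktuple n k;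
  x_hat : ktuple n k;
  cuts : seq (R * ('I_k -> 'I_n -> R))
}.

Definition alg_init (R : realType) n k (x1 : ktuple n k) : alg_state R n k :=
  AlgState -oo%E +oo%E x1 x1 [::].

Definition alg_continue (R : realType) n k (eps : R) (s : alg_state R n k) : Prop :=
  (eps%:E < theta_ub s - theta_lb s)%E.

Definition alg_step (R : realType) n k (Om : finType) (f : Om -> ktuple n k -> R)
  (xi : Om -> 'I_n -> bool) (A D : 'I_k -> nat) (Pf : set (Om -> R))
  (s s' : alg_state R n k) : Prop :=
  exists (Shat : Om -> ktuple n k) (phat : Om -> R),
    [/\ (forall w, Qfeas D (xi w) (x_hat s) (Shat w) /\
           (forall S, Qfeas D (xi w) (x_hat s) S -> f w S <= f w (Shat w))),
        Pf phat,
        (forall p, Pf p -> \sum_(w : Om) phat w * f w (Shat w)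
                            <= \sum_(w : Om) p w * f w (Shat w))
      & let v := \sum_(w : Om) phat w * f w (Shat w) in
        let newcuts := rcons (cuts s) (v, cutcoef f xi Pf Shat) in
        let improve := (v%:E < theta_ub s)%E in
        exists (eta : R) (xnew : ktuple n k),
          master_opt A newcuts eta xnew /\
          s' = AlgState eta%:E
                 (if improve then v%:E else theta_ub s)
                 (if improve then x_hat s else x_star s)
                 xnew newcuts].

(* Validity of the cuts: for any first-stage decision x, removing from the optimal
   follower solution Shat^w at xhat the items interdicted by x leaves a feasible
   solution at x.  A k-submodular function has diminishing returns, so adding the removed items back one at a time gains at most their
   singleton gains rho^w_{q,i}(empty); hence Q_w(x) >= f^w(Shat^w) - sum of these
   gains, and averaging with the worst-case distribution shows that every cut
   underestimates Phi_R.  Thus theta_lb is always a lower bound on the optimum.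

   Tightness of the cuts: an item of Shat^w is never interdicted at xhat, so the
   cut generated at xhat equals Phi_R(xhat) there.  If the master problem ever
   returned an already evaluated point, theta_lb >= Phi_R(xhat) >= theta_ub and the
   loop would stop; as the first-stage set is finite, the loop terminates. *)

From Pilot Require Import Defs.
From HB Require Import structures.
From mathcomp Require Import all_boot all_order all_algebra.
From mathcomp Require Import all_classical all_reals all_analysis.
From mathcomp Require Import lra.
(* Re-import [Defs]: the analysis library's [kernel.v] also exports a [kadd]. *)
Import Pilot.Defs.

Set Implicit Arguments.
Unset Strict Implicit.
Unset Printing Implicit Defensive.
Import Order.TTheory GRing.Theory Num.Theory numFieldNormedType.Exports.
Local Open Scope classical_set_scope.
Local Open Scope ring_scope.

Section SupInf.
Variable R : realType.

Lemma sup_eq_max (E : set R) x : E x -> (forall y, E y -> y <= x) -> sup E = x.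
Proof.
move=> Ex ub; apply/le_anti/andP; split.
  by apply: ge_sup; [exists x | move=> y /ub].
by apply: ub_le_sup => //; exists x => y /ub.
Qed.

Lemma inf_eq_min (E : set R) x : E x -> (forall y, E y -> x <= y) -> inf E = x.
Proof.
move=> Ex lb; apply/le_anti/andP; split.
  by apply: ge_inf => //; exists x => y /lb.
by apply: lb_le_inf; [exists x | move=> y /lb].
Qed.

Lemma le_sup_bounded (E : set R) x b :
  E x -> (forall y, E y -> y <= b) -> x <= sup E.
Proof. by move=> Ex ub; apply: ub_le_sup => //; exists b => y /ub. Qed.

Lemma distr_le1 (Om : finType) (p : Om -> R) w : is_distr p -> p w <= 1.
Proof.
by case=> p0 <-; rewrite (bigD1 w) //= lerDl sumr_ge0.
Qed.

Lemma norm_distr_mean_le (Om : finType) (p a : Om -> R) : is_distr p ->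
  `|\sum_w p w * a w| <= \sum_w `|a w|.
Proof.
move=> hp; apply: le_trans (ler_norm_sum _ _ _) _; apply: ler_sum => w _.
by rewrite normrM ger0_norm ?ler_piMl ?distr_le1 //; case: hp.
Qed.

Lemma norm_le_sum_norm (T : finType) (g : T -> R) x : `|g x| <= \sum_y `|g y|.
Proof. by rewrite (bigD1 x) //= lerDl sumr_ge0. Qed.

End SupInf.

Section KTuple.
Variables n k : nat.
Implicit Types (S X Y : ktuple n k) (q r : 'I_k) (i j : 'I_n).

Lemma in_Xk_mem_uniq S q r j : in_Xk S -> j \in S q -> j \in S r -> q = r.
Proof.
move=> hS jq jr; apply/eqP; apply: contraT => qr.
by move: (hS _ _ qr) => /eqP/setP/(_ j); rewrite inE jq jr inE.
Qed.

Lemma in_Xk_kempty : in_Xk (kempty n k).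
Proof. by move=> q r _; rewrite !ffunE finset.setI0. Qed.

Lemma in_Xk_sub S S' : in_Xk S -> (forall r, S' r \subset S r) -> in_Xk S'.
Proof.
move=> hS sub q r qr; apply/eqP/setP => j; rewrite !inE.
apply/negP => /andP[/(fintype.subsetP (sub q)) jq /(fintype.subsetP (sub r)) jr].
by move/eqP: qr; apply; apply: in_Xk_mem_uniq hS jq jr.
Qed.

Lemma mem_kadd S q i r j :
  (j \in kadd S q i r) = ((r == q) && (j == i)) || (j \in S r).
Proof. by rewrite ffunE; case: (r == q); rewrite ?inE. Qed.

Lemma in_Xk_kadd S q i : in_Xk S -> (forall r, i \notin S r) -> in_Xk (kadd S q i).
Proof.
move=> hS hi r s rs; apply/eqP/setP => j; rewrite inE [RHS]inE !mem_kadd.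
apply/negP => /andP[hr hs].
have [ji|nji] := eqVneq j i.
  move: hr hs; rewrite ji eqxx !andbT (negbTE (hi r)) (negbTE (hi s)) !orbF.
  by move=> /eqP rq /eqP sq; rewrite rq sq eqxx in rs.
move: hr hs; rewrite (negbTE nji) !andbF /= => jr js.
by move/eqP: rs; apply; apply: in_Xk_mem_uniq hS jr js.
Qed.

Lemma kmeet_kadd_sub X Y q i : (forall r, X r \subset Y r) -> (forall r, i \notin Y r) ->
  kmeet (kadd X q i) Y = X.
Proof.
move=> XY hi; apply/ffunP => r; apply/setP => j; rewrite ffunE inE mem_kadd.
have [->|_] := eqVneq j i.
  rewrite andbT (negbTE (hi r)) andbF; apply/esym/negbTE.
  by apply: contra (hi r); apply: (fintype.subsetP (XY r)).
by rewrite andbF /=; case jX: (j \in X r) => //=; apply: (fintype.subsetP (XY r)).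
Qed.

Lemma kjoin_kadd_sub X Y q i : in_Xk Y ->
  (forall r, X r \subset Y r) -> (forall r, i \notin Y r) ->
  kjoin (kadd X q i) Y = kadd Y q i.
Proof.
move=> hY XY hi.
have U t : kadd X q i t :|: Y t = kadd Y q i t.
  apply/setP => j; rewrite inE !mem_kadd -orbA; congr (_ || _).
  by apply/orb_idl/(fintype.subsetP (XY t)).
apply/ffunP => r; rewrite ffunE U; under eq_bigr => t _ do rewrite U.
apply/setP => j; rewrite inE andbC; case jr: (j \in kadd Y q i r) => //=.
apply/negP => /bigcupP[t tr jt]; move/eqP: tr; apply.
exact: in_Xk_mem_uniq (in_Xk_kadd q hY hi) jt jr.
Qed.

Variable R : realType.
Implicit Type f : ktuple n k -> R.

Lemma marginal_le_of_sub f X Y q i : k_submodular f -> in_Xk X -> in_Xk Y ->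
  (forall r, X r \subset Y r) -> (forall r, i \notin Y r) ->
  marginal f Y q i <= marginal f X q i.
Proof.
move=> hf hX hY XY hi.
have hiX r : i \notin X r by apply: contra (hi r); apply: (fintype.subsetP (XY r)).
have := hf _ _ (in_Xk_kadd q hX hiX) hY.
by rewrite kmeet_kadd_sub // kjoin_kadd_sub // /marginal; lra.
Qed.

Definition sum_gain0 f S S' : R :=
  \sum_(q < k) \sum_(i < n) (i \in S q :\: S' q)%:R * marginal f (kempty n k) q i.

Lemma sum_gain0_id f S : sum_gain0 f S S = 0.
Proof.
by rewrite /sum_gain0 big1 // => q _; rewrite big1 // => i _; rewrite finset.setDv inE mul0r.
Qed.

Lemma sum_gain0_kadd f S S' q0 i0 : i0 \in S q0 :\: S' q0 ->
  sum_gain0 f S S' = sum_gain0 f S (kadd S' q0 i0) + marginal f (kempty n k) q0 i0.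
Proof.
move=> hqi; rewrite /sum_gain0 (bigD1 q0) // [in RHS](bigD1 q0) //= [RHS]addrAC.
congr (_ + _); last first.
  by apply: eq_bigr => q qq0; apply: eq_bigr => i _; rewrite ffunE (negbTE qq0).
rewrite (bigD1 i0) // [in RHS](bigD1 i0) //= hqi !inE ffunE eqxx !inE eqxx /=.
rewrite mul0r add0r mul1r addrC; congr (_ + _); apply: eq_bigr => i ii0.
by rewrite !inE (negbTE ii0).
Qed.

Lemma card_kdiff_kadd S S' q0 i0 : i0 \in S q0 :\: S' q0 ->
  (\sum_(q < k) #|S q :\: S' q| = (\sum_(q < k) #|S q :\: kadd S' q0 i0 q|).+1)%N.
Proof.
move=> hqi; rewrite (bigD1 q0) // [in RHS](bigD1 q0) //= -addSn; congr (_ + _)%N.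
  rewrite (cardsD1 i0) hqi add1n; congr _.+1; apply: eq_card => j.
  by rewrite !inE ffunE eqxx !inE; case: (j == i0).
by apply: eq_bigr => q qq0; rewrite ffunE (negbTE qq0).
Qed.

Lemma kdiff_nil_eq S S' : (forall r, S' r \subset S r) ->
  (forall q j, j \notin S q :\: S' q) -> S' = S.
Proof.
move=> sub none; apply/ffunP => q; apply/setP => j; apply/idP/idP.
  exact: (fintype.subsetP (sub q)).
by move=> jS; apply: contraT => jS'; move: (none q j); rewrite !inE jS jS'.
Qed.

(* Add the missing elements one at a time; by diminishing returns each gain is
   at most the corresponding gain at the empty tuple. *)
Lemma k_submodular_diff_le f S S' : k_submodular f -> in_Xk S ->
  (forall r, S' r \subset S r) -> f S - f S' <= sum_gain0 f S S'.
Proof.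
move=> hf hS; suff H m : forall S', (forall r, S' r \subset S r) ->
    (\sum_(q < k) #|S q :\: S' q| <= m)%N -> f S - f S' <= sum_gain0 f S S'.
  by move=> sub; apply: H sub (leqnn _).
elim: m => [|m IH] {}S' sub hm;
  (have [[q0 i0] /= hqi | none] :=
     pickP (fun p : 'I_k * 'I_n => p.2 \in S p.1 :\: S' p.1); last first);
  try by rewrite (kdiff_nil_eq sub (fun q j => negbT (none (q, j)))) sum_gain0_id subrr.
  by move: hm; rewrite (card_kdiff_kadd hqi).
move: (hqi); rewrite inE => /andP[i0S' i0S].
have hS' := in_Xk_sub hS sub.
have hni r : i0 \notin S' r.
  apply/negP => h; have rq := in_Xk_mem_uniq hS (fintype.subsetP (sub r) _ h) i0S.
  by rewrite -rq h in i0S'.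
have sub'' r : kadd S' q0 i0 r \subset S r.
  apply/fintype.subsetP => j; rewrite mem_kadd.
  by case/orP => [/andP[/eqP-> /eqP->] | /(fintype.subsetP (sub r))].
have := IH _ sub''; rewrite -ltnS -(card_kdiff_kadd hqi) => /(_ hm).
have sub0 r : kempty n k r \subset S' r by rewrite ffunE finset.sub0set.
have := marginal_le_of_sub q0 hf in_Xk_kempty hS' sub0 hni.
by rewrite (sum_gain0_kadd f hqi) /marginal; lra.
Qed.

End KTuple.

Section Cut.
Variables (R : realType) (n k : nat) (D : 'I_k -> nat).
Implicit Types (g : ktuple n k -> R) (xw : 'I_n -> bool) (x S : ktuple n k).

Definition cut_term (c : 'I_k -> 'I_n -> R) x : R :=
  \sum_(q < k) \sum_(i < n) c q i * (i \in x q)%:R.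

Lemma Qval_ge g xw x S : Qfeas D xw x S -> g S <= Qval g D xw x.
Proof.
move=> hS; apply: (le_sup_bounded (b := \sum_S0 `|g S0|)); first by exists S.
by move=> _ [S0 _ <-]; apply: le_trans (ler_norm _) (norm_le_sum_norm _ _).
Qed.

Lemma Qval_eq g xw x S : Qfeas D xw x S ->
  (forall S0, Qfeas D xw x S0 -> g S0 <= g S) -> Qval g D xw x = g S.
Proof. by move=> hS hm; apply: sup_eq_max; [exists S | move=> _ [S0 /hm ? <-]]. Qed.

Definition kprune xw x S : ktuple n k :=
  [ffun q => [set j in S q | ~~ ((j \in x q) && xw j)]].

Lemma kprune_sub xw x S r : kprune xw x S r \subset S r.
Proof. by rewrite ffunE; apply/fintype.subsetP => j; rewrite inE => /andP[]. Qed.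

Lemma Qfeas_kprune xw xh x S : Qfeas D xw xh S -> Qfeas D xw x (kprune xw x S).
Proof.
case=> hS _ hD; split.
- exact: in_Xk_sub hS (kprune_sub xw x S).
- move=> q i; rewrite ffunE inE.
  by case: (i \in S q); case: (i \in x q); case: (xw i).
- move=> q; apply: leq_trans (hD q); apply: leq_sum => i _; rewrite ffunE inE.
  by case: (i \in S q); case: (i \in x q); case: (xw i).
Qed.

(* Removing the interdicted items of a feasible S loses at most their singleton gains. *)
Lemma k_submodular_Qval_cut g xw xh x S : k_submodular g -> Qfeas D xw xh S ->
  g S - cut_term (fun q i => marginal g (kempty n k) q i * (i \in S q)%:R * (xw i)%:R) x
  <= Qval g D xw x.
Proof.
move=> hg hS; have [hXS _ _] := hS.
have := k_submodular_diff_le hg hXS (kprune_sub xw x S).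
have := Qval_ge g (Qfeas_kprune x hS).
have -> : sum_gain0 g S (kprune xw x S) =
    cut_term (fun q i => marginal g (kempty n k) q i * (i \in S q)%:R * (xw i)%:R) x.
  apply: eq_bigr => q _; apply: eq_bigr => i _; rewrite ffunE !inE.
  by case: (i \in S q); case: (i \in x q); case: (xw i);
    rewrite /= ?mulr1 ?mulr0 ?mul1r ?mul0r.
lra.
Qed.

Variables (Om : finType) (f : Om -> ktuple n k -> R) (xi : Om -> 'I_n -> bool).
Variable Pf : set (Om -> R).
Hypothesis Pf_distr : forall p, Pf p -> is_distr p.

Lemma le_sup_distr_mean (a : Om -> R) p :
  Pf p -> \sum_w p w * a w <= sup [set \sum_w p w * a w | p in Pf].
Proof.
move=> hp; apply: (le_sup_bounded (b := \sum_w `|a w|)); first by exists p.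
by move=> _ [p0 /Pf_distr h0 <-]; apply: le_trans (ler_norm _) (norm_distr_mean_le _ h0).
Qed.

Section AtPoint.
Variables (xh : ktuple n k) (Shat : Om -> ktuple n k) (phat : Om -> R).
Hypothesis Shat_feas : forall w, Qfeas D (xi w) xh (Shat w).
Hypothesis phat_min : forall p, Pf p ->
  \sum_w phat w * f w (Shat w) <= \sum_w p w * f w (Shat w).

Lemma PhiR_exact : (forall w S, Qfeas D (xi w) xh S -> f w S <= f w (Shat w)) ->
  Pf phat -> PhiR f xi D Pf xh = \sum_w phat w * f w (Shat w).
Proof.
move=> Shat_opt hp.
have Q w : Qval (f w) D (xi w) xh = f w (Shat w) by apply: Qval_eq; [|apply: Shat_opt].
rewrite /PhiR; under eq_imagel => p _ do under eq_bigr => w _ do rewrite Q.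
by apply: inf_eq_min; [exists phat | move=> _ [p /phat_min ? <-]].
Qed.

(* An item of [Shat w] is never interdicted at [xh], so no coefficient is paid there. *)
Lemma cut_term_cutcoef_tight : Pf !=set0 -> cut_term (cutcoef f xi Pf Shat) xh = 0.
Proof.
move=> [p0 hp0]; apply: big1 => q _; apply: big1 => i _.
case hi: (i \in xh q); last by rewrite mulr0.
have Z (p : Om -> R) w :
    p w * (marginal (f w) (kempty n k) q i * (i \in Shat w q)%:R * (xi w i)%:R) = 0.
  case hx: (xi w i); last by rewrite !mulr0.
  have [_ /(_ q i) + _] := Shat_feas w; rewrite hi hx muln1 subnn leqn0 eqb0.
  by move/negbTE => ->; rewrite mulr0 mul0r mulr0.
rewrite mulr1; apply: sup_eq_max; first by exists p0 => //; apply: big1 => w _.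
by move=> _ [p _ <-]; rewrite big1.
Qed.

Lemma cut_cutcoef_valid (hsub : forall w, k_submodular (f w)) (x : ktuple n k) :
  Pf !=set0 ->
  \sum_w phat w * f w (Shat w) - cut_term (cutcoef f xi Pf Shat) x <= PhiR f xi D Pf x.
Proof.
move=> [p0 hp0]; apply: lb_le_inf.
  by exists (\sum_w p0 w * Qval (f w) D (xi w) x); exists p0.
move=> _ [p hp <-].
pose c w := fun q i => marginal (f w) (kempty n k) q i * (i \in Shat w q)%:R * (xi w i)%:R.
have scen w : f w (Shat w) - cut_term (c w) x <= Qval (f w) D (xi w) x.
  exact: k_submodular_Qval_cut (hsub w) (Shat_feas w).
have mean : \sum_w p w * cut_term (c w) x <= cut_term (cutcoef f xi Pf Shat) x.
  rewrite /cut_term; under eq_bigr => w _ do rewrite mulr_sumr; rewrite exchange_big.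
  apply: ler_sum => q _; under eq_bigr => w _ do rewrite mulr_sumr; rewrite exchange_big.
  apply: ler_sum => i _; under eq_bigr => w _ do rewrite mulrA.
  by rewrite -mulr_suml ler_wpM2r // le_sup_distr_mean.
have avg : \sum_w p w * (f w (Shat w) - cut_term (c w) x)
    <= \sum_w p w * Qval (f w) D (xi w) x.
  by apply: ler_sum => w _; apply: ler_wpM2l; [case: (Pf_distr hp) | exact: scen].
move: avg (phat_min hp); under eq_bigr => w _ do rewrite mulrBr; rewrite sumrB; lra.
Qed.

End AtPoint.
End Cut.

Lemma first_failure (P : nat -> Prop) :
  (exists t, ~ P t) -> exists T, ~ P T /\ forall t, (t < T)%N -> P t.
Proof.
move=> [t0 nP0]; have ex : exists t, ~~ `[< P t >] by exists t0; apply/asboolPn.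
case: (ex_minnP ex) => T /asboolPn nPT minT; exists T; split => // t tT.
apply: contrapT => nP; have := minT t (introN (asboolP _) nP).
by rewrite leqNgt tT.
Qed.

Section Algorithm.
Variables (R : realType) (n k : nat) (Om : finType).
Variables (f : Om -> ktuple n k -> R) (xi : Om -> 'I_n -> bool).
Variables (A D : 'I_k -> nat) (Pf : set (Om -> R)) (eps : R).
Hypothesis f_ksub : forall w, k_submodular (f w).
Hypothesis Pf_distr : forall p, Pf p -> is_distr p.
Hypothesis Pf_nonempty : Pf !=set0.
Hypothesis eps_ge0 : 0 <= eps.

Local Notation PhiR := (PhiR f xi D Pf).

Lemma alg_step_spec (s s' : alg_state R n k) : alg_step f xi A D Pf s s' ->
  exists (v : R) (c : 'I_k -> 'I_n -> R) (eta : R),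
    [/\ v = PhiR (x_hat s),
        cuts s' = rcons (cuts s) (v, c),
        cut_term c (x_hat s) = 0,
        (forall x, v - cut_term c x <= PhiR x)
      & master_opt A (cuts s') eta (x_hat s')] /\
    [/\ theta_lb s' = eta%:E,
        theta_ub s' = (if (v%:E < theta_ub s)%E then v%:E else theta_ub s)
      & x_star s' = (if (v%:E < theta_ub s)%E then x_hat s else x_star s)].
Proof.
move=> [Shat [phat [hS hp hmin]]] /= [eta [xnew [hm ->]]].
have feas w := (hS w).1.
exists (\sum_w phat w * f w (Shat w)), (cutcoef f xi Pf Shat), eta; split; split => //=.
- by rewrite (PhiR_exact feas hmin (fun w => (hS w).2) hp).
- exact: cut_term_cutcoef_tight feas Pf_nonempty.
- by move=> x; apply: cut_cutcoef_valid.
Qed.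

Variable run : nat -> alg_state R n k.
Hypothesis run_step :
  forall t, alg_continue eps (run t) -> alg_step f xi A D Pf (run t) (run t.+1).

Local Notation running t := (alg_continue eps (run t)).

Section NonTermination.
Hypothesis run_forever : forall t, running t.

Let run_spec t := alg_step_spec (run_step (run_forever t)).

Lemma cuts_run_subset j d : {subset cuts (run j) <= cuts (run (d + j))}.
Proof.
elim: d => [|d IH] //= c /IH hc.
have [v [c' [eta [[_ -> _ _ _] _]]]] := run_spec (d + j).
by rewrite mem_rcons inE hc orbT.
Qed.

Lemma theta_ub_run_le j d : (theta_ub (run (d + j)) <= theta_ub (run j))%E.
Proof.
elim: d => [|d IH] //=; apply: le_trans IH.
have [v [c [eta [_ [_ -> _]]]]] := run_spec (d + j).
by case: ifP => // /ltW.
Qed.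

(* Revisiting [x_hat (run j)] would make the cut added at step [j] force
   [theta_lb >= PhiR (x_hat (run j)) >= theta_ub], i.e. stop the loop. *)
Lemma x_hat_run_fresh j d : x_hat (run (d + j.+1)) <> x_hat (run j).
Proof.
move=> E.
have [v [c [eta [[_ hc hz _ _] [_ hub _]]]]] := run_spec j.
have hmem : (v, c) \in cuts (run (d + j.+1)).
  by apply: cuts_run_subset; rewrite hc mem_rcons inE eqxx.
have ubv : (theta_ub (run (d + j.+1)) <= v%:E)%E.
  apply: le_trans (theta_ub_run_le _ _) _; rewrite hub.
  by case: ifP => // /negbT; rewrite -leNgt.
have [v' [c' [eta' [[_ _ _ _ [_ hok _]] [hlb' _ _]]]]] := run_spec (d + j).
rewrite -addnS in hok hlb'.
have := hok _ hmem; rewrite /cut_ok /= E -/(cut_term c _) hz subr0 => veta.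
have := run_forever (d + j.+1); rewrite /alg_continue hlb'.
move: ubv; case: (theta_ub _) => [r| |] //=.
rewrite lee_fin -EFinD lte_fin => rv; apply/negP; rewrite -leNgt.
by rewrite (le_trans _ eps_ge0) // subr_le0 (le_trans rv veta).
Qed.

Lemma run_forever_false : False.
Proof.
pose N := #|{: ktuple n k}|.
have inj : injective (fun t : 'I_N.+1 => x_hat (run t)).
  move=> i j /= E; apply/val_inj/eqP; apply: contraT => ij.
  case: (ltngtP i j) ij => // [ilt|jlt] _.
  - by move: E; rewrite -(subnK ilt) => /esym/x_hat_run_fresh.
  - by move: E; rewrite -(subnK jlt) => /x_hat_run_fresh.
by have := leq_card _ inj; rewrite card_ord ltnn.
Qed.

End NonTermination.

Lemma alg_terminates : exists t, ~ running t.
Proof.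
apply: contrapT => hall; apply: run_forever_false => t.
by apply: contrapT => nP; apply: hall; exists t.
Qed.

Definition alg_invariant (s : alg_state R n k) : Prop :=
  [/\ (forall c, c \in cuts s -> forall x, in_calX A x -> cut_ok (PhiR x) x c),
      in_calX A (x_hat s)
    & theta_ub s = +oo%E \/ theta_ub s = (PhiR (x_star s))%:E /\ in_calX A (x_star s)].

Variable x1 : ktuple n k.
Hypothesis x1_feas : in_calX A x1.
Hypothesis run0 : run 0%N = alg_init R x1.

Lemma alg_invariant_run T : (forall t, (t < T)%N -> running t) -> alg_invariant (run T).
Proof.
elim: T => [_|t IH runT]; first by rewrite run0; split => //; left.
have [Ic Ix Iu] := IH (fun u ut => runT u (ltnW ut)).
have [v [c [eta [[hv hc _ hvalid [hx _ _]] [_ hub hxs]]]]] :=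
  alg_step_spec (run_step (runT t (ltnSn t))).
split => //.
- move=> c0; rewrite hc mem_rcons inE => /orP[/eqP-> x _ | /Ic //].
  exact: hvalid.
- by rewrite hub hxs; case: ifP => _; [right; rewrite hv | exact: Iu].
Qed.

Lemma theta_lb_run_le_PhiR t : (forall u, (u <= t)%N -> running u) ->
  exists eta : R, theta_lb (run t.+1) = eta%:E /\
    forall x, in_calX A x -> eta <= PhiR x.
Proof.
move=> runt; have [Ic _ _] := alg_invariant_run (T := t.+1) runt.
have [v [c [eta [[_ _ _ _ [_ _ hmin]] [hlb _ _]]]]] :=
  alg_step_spec (run_step (runt t (leqnn t))).
by exists eta; split => // x hx; apply: (hmin _ x hx) => c0 /Ic/(_ x hx).
Qed.

End Algorithm.

Theorem theorem7 (R : realType) (n k : nat) (Om : finType)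
  (f : Om -> ktuple n k -> R) (xi : Om -> 'I_n -> bool)
  (A D : 'I_k -> nat) (Pf : set (Om -> R)) (eps : R)
  (x1 : ktuple n k) (run : nat -> alg_state R n k) :
  (0 < n)%N -> (0 < k)%N ->
  (forall w, k_submodular (f w)) -> (forall w, k_monotone (f w)) ->
  Pf !=set0 -> @compact {ptws Om -> R} Pf -> (forall p, Pf p -> is_distr p) ->
  0 <= eps ->
  in_calX A x1 ->
  run 0%N = alg_init R x1 ->
  (forall t, alg_continue eps (run t) -> alg_step f xi A D Pf (run t) (run t.+1)) ->
  exists T : nat,
    [/\ (forall t, (t < T)%N -> alg_continue eps (run t)),
        ~ alg_continue eps (run T),
        theta_ub (run T) = (PhiR f xi D Pf (x_star (run T)))%:E,
        in_calX A (x_star (run T))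
      & forall x, in_calX A x ->
          PhiR f xi D Pf (x_star (run T)) <= PhiR f xi D Pf x + eps].
Proof.
move=> _ _ hsub _ hPf _ hd heps hx1 h0 hstep.
have [[|T] [stopT runT]] := first_failure (alg_terminates hsub hd hPf heps hstep).
  by case: stopT; rewrite /alg_continue h0 /= ltry.
have [_ _ hub] := alg_invariant_run hsub hd hPf hstep hx1 h0 runT.
have [eta [hlb etale]] :=
  theta_lb_run_le_PhiR hsub hd hPf hstep hx1 h0 (t := T) (fun u => runT u).
case: hub => [ubinf | [hub hxs]].
  by case: stopT; rewrite /alg_continue ubinf hlb /= ltry.
exists T.+1; split => // x hx.
move: stopT; rewrite /alg_continue hub hlb -EFinD lte_fin => /negP; rewrite -leNgt.
by have := etale x hx; lra.
Qed.
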